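(* Let $m=2^\ell\ge 4$ and let $R\subseteq\{0,1\}^N\times W$ be a relation. Then $C^{dt}(R)=O\big(\log_m L^{\oplus,\oplus}(R\circ\mathrm{IND}_m^N)\big)$.
   Context: $\mathrm{IND}_m:[m]\times\{0,1\}^m\to\{0,1\}$, $\mathrm{IND}_m(x,y)=y_x$. Alice's input $x\in[m]^N$ is encoded by Boolean variables $x_{i,j'}$ ($i\in[N]$, $0\le j'<\ell$), the binary representation of $x_i$; Bob's input is $y\in(\{0,1\}^m)^N$ with Boolean variables $y_{i,j}$. $R\circ\mathrm{IND}_m^N$ relates $(x,y)$ to $w$ iff $(\mathrm{IND}_m^N(x,y),w)\in R$, where $\mathrm{IND}_m^N(x,y)=(\mathrm{IND}_m(x_i,y_i))_i$. A parity-communication protocol is a deterministic two-party protocol in which every bit sent by Alice is a parity (over $\mathbb{F}_2$) of her input bits and every bit sent by Bob is a parity of his input bits, chosen depending on the transcript so far; it solves the relation if on each input it outputs a related $w$ (or $\bot$ if none exists). $L^{\oplus,\oplus}(R')$ is the minimum number of leaves of a parity-communication protocol solving $R'$. $C^{dt}(R)$ is the minimum height of a decision tree on $z\in\{0,1\}^N$ outputting some $w$ with $(z,w)\in R$ (or $\bot$ if none exists). *)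

From mathcomp Require Import all_boot.
Set Implicit Arguments. Unset Strict Implicit. Unset Printing Implicit Defensive.

Definition relation (N : nat) (W : Type) := ('I_N -> bool) -> W -> Prop.

(* "out solves R on input z": out is some w with R z w, or ⊥ (None) iff no such w. *)
Definition correct_output (A W : Type) (R : A -> W -> Prop) (a : A) (out : option W) : Prop :=
  match out with
  | Some w => R a w
  | None => forall w, ~ R a w
  end.

Inductive dtree (N : nat) (W : Type) :=
| DLeaf of option W
| DQuery of 'I_N & dtree N W & dtree N W.

Fixpoint dt_eval N W (t : dtree N W) (z : 'I_N -> bool) : option W :=
  match t with
  | DLeaf o => o
  | DQuery i t0 t1 => if z i then dt_eval t1 z else dt_eval t0 z
  end.

Fixpoint dt_height N W (t : dtree N W) : nat :=
  match t with
  | DLeaf _ => 0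
  | DQuery _ t0 t1 => (maxn (dt_height t0) (dt_height t1)).+1
  end.

Definition dt_solves N W (R : relation N W) (t : dtree N W) : Prop :=
  forall z, correct_output R z (dt_eval t z).

Definition is_Cdt N W (R : relation N W) (d : nat) : Prop :=
  (exists t, dt_solves R t /\ dt_height t = d) /\
  (forall t, dt_solves R t -> d <= dt_height t).

Definition alice_input (N l : nat) := 'I_N -> 'I_(2 ^ l).
Definition bob_input (N l : nat) := 'I_N -> 'I_(2 ^ l) -> bool.

Definition xbit N l (x : alice_input N l) (v : 'I_N * 'I_l) : bool :=
  odd (x v.1 %/ 2 ^ v.2).
Definition ybit N l (y : bob_input N l) (v : 'I_N * 'I_(2 ^ l)) : bool := y v.1 v.2.

Definition IND N l (x : alice_input N l) (y : bob_input N l) : 'I_N -> bool :=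
  fun i => y i (x i).

Definition lift_rel N W l (R : relation N W) :
  (alice_input N l * bob_input N l) -> W -> Prop :=
  fun xy w => R (IND xy.1 xy.2) w.

Definition parity (V : finType) (b : V -> bool) (S : {set V}) : bool :=
  \big[addb/false]_(v in S) b v.

Inductive pprot (N l : nat) (W : Type) :=
| PLeaf of option W
| PAlice of {set 'I_N * 'I_l} & pprot N l W & pprot N l W
| PBob of {set 'I_N * 'I_(2 ^ l)} & pprot N l W & pprot N l W.

Fixpoint pp_eval N l W (p : pprot N l W) (x : alice_input N l) (y : bob_input N l)
  : option W :=
  match p with
  | PLeaf o => o
  | PAlice Sa p0 p1 => if parity (xbit x) Sa then pp_eval p1 x y else pp_eval p0 x y
  | PBob Sb p0 p1 => if parity (ybit y) Sb then pp_eval p1 x y else pp_eval p0 x y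
  end.

Fixpoint pp_leaves N l W (p : pprot N l W) : nat :=
  match p with
  | PLeaf _ => 1
  | PAlice _ p0 p1 => pp_leaves p0 + pp_leaves p1
  | PBob _ p0 p1 => pp_leaves p0 + pp_leaves p1
  end.

Definition pp_solves N l W (R : relation N W) (p : pprot N l W) : Prop :=
  forall x y, correct_output (@lift_rel N W l R) (x, y) (pp_eval p x y).

Definition is_Lpp N l W (R : relation N W) (L : nat) : Prop :=
  (exists p : pprot N l W, pp_solves R p /\ pp_leaves p = L) /\
  (forall p : pprot N l W, pp_solves R p -> L <= pp_leaves p).

From Stdlib Require Import Reals.
From mathcomp Require Import all_boot.
From mathcomp Require Import zify.
From Stdlib Require Import Classical FunctionalExtensionality Lra.
Set Implicit Arguments. Unset Strict Implicit. Unset Printing Implicit Defensive.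

(* An adversary argument.  Inputs of R o IND are points of F_2^V, V being the bits of
   x and y.  The adversary keeps a set S of inputs that is affine and on which a set F
   of coordinates is free and determines the point (a [chart]), together with a
   partial assignment rho of z.  Every block i is either fixed by rho, contains no free
   variable and has IND_i constant on S, or is unfixed with fewer than l pinned
   (non-free) variables, so that IND_i can still be steered either way.  A parity
   query is constant on S or has a free pivot coordinate; answering it pins one more
   variable.  When an unfixed block reaches l pinned variables it is stifled: its free
   variables are set so that z_i takes the value keeping the residual decision-tree
   complexity at least n - 1.  With weight = number of pinned variables in unfixed
   blocks, the invariant 2^(l n) <= leaves * 2^weight holds at every node: each answer
   to a query raises the weight by one, and a stifling trades l units of weight for
   one decision-tree query.  At the root the weight is 0, so
   m^(C^dt(R)) <= L^(+,+)(R o IND_m^N). *)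

Section Charts.
Variable V : finType.
Local Notation vec := {ffun V -> bool}.
Implicit Types (S : vec -> Prop) (F B : {set V}) (a u v w : vec) (q : vec -> bool).

Definition agree F u w := forall x, x \in F -> u x = w x.
Definition xor3 u v w : vec := [ffun x => u x (+) v x (+) w x].
Definition flip u (x : V) : vec := [ffun y => if y == x then ~~ u y else u y].

Definition affine S := forall u v w, S u -> S v -> S w -> S (xor3 u v w).
Definition chart S F := [/\ affine S, forall a, exists2 u, S u & agree F u a
  & forall u w, S u -> S w -> agree F u w -> u = w].
Definition linear_form q := forall u v w, q (xor3 u v w) = q u (+) q v (+) q w.
Definition pivot S F q x :=
  forall u w, S u -> S w -> agree (F :\ x) u w -> u x != w x -> q u != q w.

Lemma flip_agree F u x y : y \in F :\ x -> flip u x y = u y.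
Proof. by rewrite !inE ffunE => /andP [/negbTE ->]. Qed.

Lemma linear_form_parity (T : finType) (e : T -> V) (A : {set T}) :
  linear_form (fun u => \big[addb/false]_(t in A) u (e t)).
Proof. by move=> u v w; under eq_bigr => t _ do rewrite ffunE; rewrite !big_split. Qed.

Section Pivot.
Variables (S : vec -> Prop) (F : {set V}) (q : vec -> bool).
Hypotheses (chS : chart S F) (linq : linear_form q).

Lemma pivot_of_witness x u1 u3 : x \in F -> S u1 -> S u3 ->
  agree (F :\ x) u1 u3 -> u1 x != u3 x -> q u1 != q u3 -> pivot S F q x.
Proof.
have [affS _ detS] := chS.
move=> xF S1 S3 a13 n13 q13 w w' Sw Sw' aw nw.
(* [w'] differs from [w] exactly as [u3] differs from [u1]. *)
have -> : w' = xor3 w u1 u3.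
  apply: detS => //; first exact: affS.
  move=> y yF; rewrite ffunE; case: (eqVneq y x) => [->|yx].
    by move: n13 nw; case: (u1 x); case: (u3 x); case: (w x); case: (w' x).
  have yFx : y \in F :\ x by rewrite !inE yx.
  by rewrite (aw y yFx) (a13 y yFx) addbK.
by rewrite linq; move: q13; case: (q u1); case: (q u3); case: (q w).
Qed.

Lemma linear_form_pivot u1 u2 : S u1 -> S u2 -> q u1 != q u2 ->
  exists2 x, x \in F & pivot S F q x.
Proof.
have [_ ontoS detS] := chS.
move=> S1 S2 q12; set D := fun u => [set x in F | u x != u2 x].
(* Walk from [u1] towards [u2] one free coordinate at a time; the first step that
   changes [q] witnesses a pivot. *)
have [k leDk] := ubnP #|D u1|.
elim: k u1 leDk S1 q12 => // k IHk u1 leDk S1 q12.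
have [x] : exists x, x \in D u1.
  apply/set0Pn; apply: contra q12 => /eqP D0.
  suff -> : u1 = u2 by [].
  apply: detS => // y yF; apply/eqP; apply: contraT => ne.
  by have := in_set0 y; rewrite -D0 inE yF ne.
rewrite inE => /andP [xF n12].
have [u3 S3 a3] := ontoS (flip u1 x).
have a13 : agree (F :\ x) u1 u3.
  move=> y yFx; rewrite -(flip_agree u1 yFx) a3 //.
  by move: yFx; rewrite inE => /andP [].
have u3x : u3 x = ~~ u1 x by rewrite a3 // ffunE eqxx.
case: (eqVneq (q u1) (q u3)) => [q13|q13]; last first.
  exists x => //; apply: (pivot_of_witness xF S1 S3 a13) => //.
  by rewrite u3x; case: (u1 x).
apply: (IHk u3) => //; last by rewrite -q13.
rewrite -ltnS; apply: leq_trans leDk; apply: proper_card; apply/properP; split.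
  apply/subsetP => y; rewrite !inE => /andP [yF ny]; rewrite yF.
  case: (eqVneq y x) => [-> //|yx].
  by rewrite a13 // !inE yx.
by exists x; rewrite !inE xF ?n12 // u3x; move: n12; case: (u1 x); case: (u2 x).
Qed.

Lemma chart_level x b : x \in F -> pivot S F q x ->
  chart (fun u => S u /\ q u = b) (F :\ x).
Proof.
have [affS ontoS detS] := chS.
move=> xF pivx; split.
- move=> u v w [Su qu] [Sv qv] [Sw qw]; split; first exact: affS.
  by rewrite linq qu qv qw addbb.
- move=> a; have [u Su au] := ontoS a.
  have aFx : agree (F :\ x) u a by move=> y; rewrite inE => /andP [_ /au].
  case: (eqVneq (q u) b) => [qu|qu]; first by exists u.
  have [u' Su' au'] := ontoS (flip u x).
  have aux : agree (F :\ x) u u'.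
    move=> y yFx; rewrite -(flip_agree u yFx) au' //.
    by move: yFx; rewrite inE => /andP [].
  have nx : u x != u' x by rewrite au' // ffunE eqxx; case: (u x).
  exists u' => [|y yFx]; last by rewrite -aux ?aFx.
  split => //; move: qu (pivx u u' Su Su' aux nx).
  by case: (q u); case: (q u'); case: b.
- move=> u w [Su qu] [Sw qw] auw; apply: detS => // y yF.
  case: (eqVneq y x) => [->|yx]; last by apply: auw; rewrite !inE yx.
  by apply/eqP; apply: contraT => /(pivx u w Su Sw auw); rewrite qu qw eqxx.
Qed.

End Pivot.

Lemma chart_pin S F B a : chart S F ->
  chart (fun u => S u /\ agree (F :&: B) u a) (F :\: B).
Proof.
case=> affS ontoS detS; split.
- move=> u v w [Su au] [Sv av] [Sw aw]; split; first exact: affS.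
  by move=> y yFB; rewrite ffunE au // av // aw //; case: (a y).
- move=> a0; have [u Su au] := ontoS [ffun y => if y \in B then a y else a0 y].
  exists u; first by split => // y /setIP [yF yB]; rewrite au // ffunE yB.
  by move=> y /setDP [yF /negbTE yB]; rewrite au // ffunE yB.
- move=> u w [Su au] [Sw aw] auw; apply: detS => // y yF.
  case: (boolP (y \in B)) => yB; first by rewrite au ?aw // inE yF.
  by apply: auw; rewrite inE yF yB.
Qed.

Lemma chart_full : chart (fun _ => True) setT.
Proof.
split=> // [a|u w _ _ auw]; first by exists a.
by apply/ffunP => y; apply: auw; rewrite inE.
Qed.

End Charts.

Definition binval n (f : 'I_n -> bool) := \sum_(k < n) f k * 2 ^ k.

Lemma binvalS n (f : 'I_n.+1 -> bool) :
  binval f = f ord0 + 2 * binval (fun k => f (lift ord0 k)).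
Proof.
rewrite /binval big_ord_recl expn0 muln1 big_distrr; congr (_ + _).
by apply: eq_bigr => k _; rewrite /bump /= expnS; lia.
Qed.

Lemma binval_lt n (f : 'I_n -> bool) : binval f < 2 ^ n.
Proof.
elim: n f => [|n IHn] f; first by rewrite /binval big_ord0.
by rewrite binvalS expnS; have := IHn (fun k => f (lift ord0 k)); case: (f ord0) => /=; lia.
Qed.

Lemma odd_binval n (f : 'I_n -> bool) (j : 'I_n) : odd (binval f %/ 2 ^ j) = f j.
Proof.
elim: n f j => [|n IHn] f [[|j] ltjn] //; rewrite binvalS.
  by rewrite divn1 oddD oddM /= addbF oddb; congr f; apply: val_inj.
have -> : Ordinal ltjn = lift ord0 (Ordinal (ltjn : j < n)) by apply: val_inj.
rewrite -(IHn (fun k => f (lift ord0 k))) expnS divnMA; congr (odd (_ %/ _)).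
by case: (f ord0) => /=; lia.
Qed.

Lemma ffun_notin_imset (D T : finType) (f : T -> {ffun D -> bool}) (B : {set T}) :
  #|B| < 2 ^ #|D| -> exists pat, pat \notin f @: B.
Proof.
move=> ltB; case: (pickP [predC f @: B]) => [pat fBpat|allfB]; first by exists pat.
suff : 2 ^ #|D| <= #|B| by rewrite leqNgt ltB.
rewrite -card_bool -card_ffun -cardsT; apply: leq_trans (leq_imset_card f B).
by apply: subset_leq_card; apply/subsetP => p _; move: (allfB p) => /= /negbFE.
Qed.

Section Lifting.
Variables (N l : nat) (W : Type) (Rel : relation N W).

Definition var := ('I_N * 'I_l + 'I_N * 'I_(2 ^ l))%type.
Local Notation input := {ffun var -> bool}.
Implicit Types (S : input -> Prop) (F : {set var}) (u : input) (p : pprot N l W)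
  (rho : 'I_N -> option bool).

Definition blk (v : var) : 'I_N := match v with inl vA => vA.1 | inr vB => vB.1 end.
Definition block i : {set var} := [set v | blk v == i].

Definition xof u : alice_input N l :=
  fun i => Ordinal (binval_lt (fun k => u (inl (i, k)))).
Definition yof u : bob_input N l := fun i j => u (inr (i, j)).
Definition ind_of u := IND (xof u) (yof u).
Definition run p u := pp_eval p (xof u) (yof u).
Definition solves_on (out : input -> option W) S :=
  forall u, S u -> correct_output (lift_rel Rel) (xof u, yof u) (out u).

Lemma linear_form_xparity (A : {set 'I_N * 'I_l}) :
  linear_form (fun u => parity (xbit (xof u)) A).
Proof.
have eA u : parity (xbit (xof u)) A = \big[addb/false]_(v in A) u (inl v).
  by apply: eq_bigr => -[i j] _; rewrite /xbit odd_binval.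
by move=> u v w; rewrite !eA linear_form_parity.
Qed.

Lemma linear_form_yparity (B : {set 'I_N * 'I_(2 ^ l)}) :
  linear_form (fun u => parity (ybit (yof u)) B).
Proof.
have eB u : parity (ybit (yof u)) B = \big[addb/false]_(v in B) u (inr v).
  by apply: eq_bigr => -[i j].
by move=> u v w; rewrite !eB linear_form_parity.
Qed.

Definition extends rho (z : 'I_N -> bool) := forall i b, rho i = Some b -> z i = b.
Definition fix_at rho i0 b i := if i == i0 then Some b else rho i.
Definition solves_under rho (t : dtree N W) :=
  forall z, extends rho z -> correct_output Rel z (dt_eval t z).
Definition hard rho n := forall t, solves_under rho t -> n <= dt_height t.

Lemma hard_fix rho n i0 : hard rho n.+1 -> exists b, hard (fix_at rho i0 b) n.
Proof.
move=> hardn1; apply: NNPP => /not_ex_all_not easy.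
have small b : exists2 t, solves_under (fix_at rho i0 b) t & dt_height t < n.
  apply: NNPP => nosmall; apply: (easy b) => t tsol; rewrite leqNgt.
  by apply/negP => lt_n; apply: nosmall; exists t.
have [[t0 sol0 lt0] [t1 sol1 lt1]] := (small false, small true).
suff : n.+1 <= dt_height (DQuery i0 t0 t1) by rewrite /= ltnS leq_max leqNgt lt0 leqNgt lt1.
apply: hardn1 => z ext_z /=.
have ext_zi0 : extends (fix_at rho i0 (z i0)) z.
  by move=> i b; rewrite /fix_at; case: eqP => [-> [] | _ /ext_z].
by case: (z i0) ext_zi0 => [/sol1|/sol0].
Qed.

Definition nonfree F i := #|block i :\: F|.
Definition weight F rho := \sum_(i < N | rho i == None) nonfree F i.
Definition fixed_ok S F rho := forall i b, rho i = Some b ->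
  [disjoint block i & F] /\ forall u, S u -> ind_of u i = b.
Definition invariant S F rho :=
  [/\ chart S F, fixed_ok S F rho & forall i, rho i = None -> nonfree F i < l].

Lemma nonfree_eq F F' i : block i :&: F = block i :&: F' -> nonfree F i = nonfree F' i.
Proof.
move/setP => eF; apply: eq_card => v; have := eF v; rewrite !inE.
by case: (blk v == i) => /= [->|]; rewrite ?andbT ?andbF.
Qed.

Lemma nonfree_setD1 F x : x \in F -> nonfree (F :\ x) (blk x) = (nonfree F (blk x)).+1.
Proof.
move=> xF; rewrite /nonfree (_ : _ :\: (F :\ x) = x |: (block (blk x) :\: F)).
  by rewrite cardsU1 !inE xF /= add1n.
by apply/setP => v; rewrite !inE; case: (eqVneq v x) => [->|] //=; rewrite eqxx.
Qed.

Lemma nonfree_setD1_other F x i : i != blk x -> nonfree (F :\ x) i = nonfree F i.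
Proof.
move=> ix; apply: nonfree_eq; apply/setP => v; rewrite !inE.
by case: (eqVneq v x) => // ->; rewrite eq_sym (negbTE ix).
Qed.

Lemma nonfree_setD_block F i i0 : i != i0 -> nonfree (F :\: block i0) i = nonfree F i.
Proof.
move=> ii0; apply: nonfree_eq; apply/setP => v; rewrite !inE.
by case: (eqVneq (blk v) i) => // ->; rewrite (negbTE ii0).
Qed.

Lemma weight_setD1 F rho x : x \in F -> rho (blk x) = None ->
  weight (F :\ x) rho = (weight F rho).+1.
Proof.
move=> xF rhox; rewrite /weight !(bigD1 (blk x) (_ : rho (blk x) == None)) ?rhox //=.
rewrite nonfree_setD1 // addSn; congr (_ + _).+1.
by apply: eq_bigr => i /andP [_ ix]; apply: nonfree_setD1_other.
Qed.

Lemma weight_fix F rho i0 b : rho i0 = None ->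
  weight (F :\: block i0) (fix_at rho i0 b) + nonfree F i0 = weight F rho.
Proof.
move=> rhoi0; rewrite /weight [RHS](bigD1 i0) ?rhoi0 //= addnC; congr (_ + _).
apply: eq_big => i; rewrite /fix_at; case: (eqVneq i i0) => [->|ii0] //.
- by rewrite andbF.
- by rewrite andbT.
- by move=> _; apply: nonfree_setD_block.
Qed.

Lemma fixed_ok_sub S S' F F' rho : (forall u, S' u -> S u) -> F' \subset F ->
  fixed_ok S F rho -> fixed_ok S' F' rho.
Proof.
move=> sS sF fixS i b /fixS [disjF valS]; split; first exact: disjointWr disjF.
by move=> u /sS /valS.
Qed.

Lemma nonfree_sides F i :
  #|[set j | inl (i, j) \notin F]| + #|[set j | inr (i, j) \notin F]| <= nonfree F i.
Proof.
set A := [set j | _]; set B := [set j | _].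
pose inA j : var := inl (i, j); pose inB j : var := inr (i, j).
have injA : injective inA by move=> j k [].
have injB : injective inB by move=> j k [].
rewrite -(card_imset A injA) -(card_imset B injB).
have [_] := leq_card_setU (inA @: A) (inB @: B).
have -> : [disjoint inA @: A & inB @: B].
  by apply/pred0P => v /=; apply/andP => -[/imsetP [j _ ->] /imsetP [k _]].
move/eqP <-; apply: subset_leq_card; apply/subsetP => v.
by rewrite !inE => /orP [] /imsetP [j]; rewrite inE => Fj -> /=; rewrite Fj eqxx.
Qed.

(* If k bits of [x_i] are pinned, at most l - k positions of [y_i] are pinned, fewer than
   the 2^(l - k) settings of the free bits of [x_i]: some setting points to a free
   position of [y_i], which can then hold [b]. *)
Lemma stifle F i b : nonfree F i <= l ->
  exists a : input, forall u, agree (F :&: block i) u a -> ind_of u i = b.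
Proof.
move=> le_l; have := nonfree_sides F i.
set A := [set j | _]; set B := [set j | _] => le_AB.
pose D := {j : 'I_l | inl (i, j) \in F}.
pose bits (j : 'I_(2 ^ l)) : {ffun D -> bool} :=
  [ffun d : D => odd (j %/ 2 ^ val (val d))].
have cardD : #|{: D}| + #|A| = l.
  rewrite card_sig addnC -[RHS](card_ord l) -(cardC A); congr (_ + _).
  by apply: eq_card => j; rewrite !inE negbK.
have ltB : #|B| < 2 ^ #|{: D}| by apply: leq_ltn_trans (ltn_expl _ (ltnSn 1)); lia.
have [pat patB] := ffun_notin_imset bits ltB.
exists [ffun v => if v is inl (_, j) then (if insub j is Some d then pat d else false)
                  else b].
move=> u agr_ua; have inFi v : v \in F -> blk v = i -> v \in F :&: block i.
  by move=> vF bv; rewrite !inE vF bv eqxx.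
have xB : xof u i \notin B.
  apply: contra patB => xB; apply/imsetP; exists (xof u i) => //.
  apply/ffunP => d; rewrite ffunE /= odd_binval agr_ua ?inFi ?(valP d) //.
  by rewrite ffunE valK.
by rewrite /ind_of /IND /yof agr_ua ?inFi ?ffunE //; move: xB; rewrite inE negbK.
Qed.

Lemma invariant_realizes S F rho z : invariant S F rho -> extends rho z ->
  exists2 u, S u & ind_of u = z.
Proof.
case=> -[_ ontoS _] fixS smallF ext_z.
have stifle_i i : exists a : input, rho i = None ->
    forall u, agree (F :&: block i) u a -> ind_of u i = z i.
  case rhoi: (rho i) => [c|]; first by exists [ffun=> false].
  by have [a ha] := stifle (z i) (ltnW (smallF i rhoi)); exists a.
have [a stifled] := fin_all_exists stifle_i.
have [u Su agr_u] := ontoS [ffun v => a (blk v) v].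
exists u => //; apply: functional_extensionality => i.
case rhoi: (rho i) => [c|]; first by rewrite (ext_z _ _ rhoi); have [_ ->] := fixS _ _ rhoi.
apply: (stifled i rhoi) => v /setIP [vF]; rewrite inE => /eqP bv.
by rewrite agr_u // ffunE bv.
Qed.

Lemma pp_leaves_gt0 p : 0 < pp_leaves p.
Proof. by elim: p => //= [_ p0 + p1|_ p0 + p1]; rewrite addn_gt0 => ->. Qed.

Definition leaves_bound p := forall S F rho n, invariant S F rho ->
  solves_on (run p) S -> hard rho n -> 2 ^ (l * n) <= pp_leaves p * 2 ^ weight F rho.

(* A block with l pinned variables is stifled: the decision tree learns [z_i0] for free,
   which pays for the l units of weight the block carried. *)
Lemma leaves_bound_saturating p S F rho n i0 : leaves_bound p ->
  chart S F -> fixed_ok S F rho -> (forall i, rho i = None -> i != i0 -> nonfree F i < l) ->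
  rho i0 = None -> nonfree F i0 <= l -> solves_on (run p) S -> hard rho n ->
  2 ^ (l * n) <= pp_leaves p * 2 ^ weight F rho.
Proof.
move=> IHp chS fixS smallF rhoi0 le_l solS hardn.
case: (ltnP (nonfree F i0) l) => [lt_l|ge_l].
  apply: IHp solS hardn; split => // i rhoi.
  by case: (eqVneq i i0) => [-> //|]; apply: smallF.
case: n hardn => [|n] hardn; first by rewrite muln0 muln_gt0 pp_leaves_gt0 expn_gt0.
have [b hardb] := hard_fix i0 hardn.
have [a stifled] := stifle b le_l.
pose S' u := S u /\ agree (F :&: block i0) u a.
have inv' : invariant S' (F :\: block i0) (fix_at rho i0 b).
  split; first exact: chart_pin.
  - move=> i c; rewrite /fix_at; case: (eqVneq i i0) => [-> [<-]|_ rhoi].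
      split=> [|u [_ /stifled] //]; apply/pred0P => v /=.
      by rewrite !inE; case: (blk v == i0); rewrite ?andbF.
    by apply: fixed_ok_sub (subsetDl F _) fixS i c rhoi => u [].
  - move=> i; rewrite /fix_at; case: (eqVneq i i0) => // ii0 rhoi.
    by rewrite nonfree_setD_block // smallF.
have := IHp _ _ _ _ inv' (fun u Su' => solS u (proj1 Su')) hardb.
have eq_l : nonfree F i0 = l by apply/eqP; rewrite eqn_leq le_l ge_l.
rewrite -(weight_fix F b rhoi0) eq_l mulnS !expnD; nia.
Qed.

Lemma leaves_bound_level q p S F rho n x b : leaves_bound p -> linear_form q ->
  invariant S F rho -> x \in F -> pivot S F q x ->
  solves_on (run p) (fun u => S u /\ q u = b) -> hard rho n ->
  2 ^ (l * n) <= pp_leaves p * 2 ^ (weight F rho).+1.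
Proof.
move=> IHp linq [chS fixS smallF] xF pivx solb hardn.
have rhox : rho (blk x) = None.
  case rhox: (rho (blk x)) => [c|] //; have [disj _] := fixS _ _ rhox.
  have xb : x \in block (blk x) by rewrite inE.
  by rewrite (disjointFr disj xb) in xF.
rewrite -(weight_setD1 xF rhox).
apply: (leaves_bound_saturating (i0 := blk x) IHp) solb hardn => //.
- exact: chart_level.
- by apply: fixed_ok_sub (subD1set F x) fixS => u [].
- by move=> i rhoi ix; rewrite nonfree_setD1_other // smallF.
- by rewrite nonfree_setD1 // smallF.
Qed.

Lemma leaves_bound_query q p0 p1 S F rho n : linear_form q ->
  leaves_bound p0 -> leaves_bound p1 -> invariant S F rho ->
  solves_on (fun u => if q u then run p1 u else run p0 u) S -> hard rho n ->
  2 ^ (l * n) <= (pp_leaves p0 + pp_leaves p1) * 2 ^ weight F rho.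
Proof.
move=> linq IH0 IH1 invS solS hardn; have [chS _ _] := invS; have [_ ontoS _] := chS.
have IHb c : leaves_bound (if c then p1 else p0) by case: c.
have solb c : solves_on (run (if c then p1 else p0)) (fun u => S u /\ q u = c).
  by move=> u [Su qu]; have := solS u Su; rewrite qu; case: c {qu}.
have [u0 Su0 _] := ontoS [ffun=> false].
case: (classic (exists2 u, S u & q u != q u0)) => [[u1 Su1 q10]|qconst].
  have [x xF pivx] := linear_form_pivot chS linq Su1 Su0 q10.
  have := leaves_bound_level (IHb true) linq invS xF pivx (solb true) hardn.
  have := leaves_bound_level (IHb false) linq invS xF pivx (solb false) hardn.
  rewrite expnS /=; nia.
have qS u : S u -> q u = q u0.
  by move=> Su; apply/eqP; apply: contra_notT qconst => ?; exists u.
apply: leq_trans (IHb (q u0) _ _ _ _ invS _ hardn) _.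
  by move=> u Su; have := solS u Su; rewrite qS //; case: (q u0).
by rewrite leq_mul2r; case: (q u0); rewrite ?leq_addl ?leq_addr orbT.
Qed.

Lemma leaves_bound_pprot p : leaves_bound p.
Proof.
elim: p => [o|A p0 IH0 p1 IH1|B p0 IH0 p1 IH1] S F rho n invS solS hardn.
- case: n hardn => [|n] hardn; first by rewrite muln0 /= mul1n expn_gt0.
  have // : n < dt_height (DLeaf N o).
  by apply: hardn => z /(invariant_realizes invS) [u Su <-]; apply: solS.
- exact: (leaves_bound_query (linear_form_xparity A) IH0 IH1 invS solS hardn).
- exact: (leaves_bound_query (linear_form_yparity B) IH0 IH1 invS solS hardn).
Qed.

Lemma leaves_lower_bound p d : 0 < l -> pp_solves Rel p ->
  (forall t, dt_solves Rel t -> d <= dt_height t) -> 2 ^ (l * d) <= pp_leaves p.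
Proof.
move=> l_gt0 solp mind.
have nonfreeT i : nonfree setT i = 0 by rewrite /nonfree setDT cards0.
have inv0 : invariant (fun=> True) setT (fun=> None).
  by split=> // [|i _]; [exact: chart_full | rewrite nonfreeT].
have hard0 : hard (fun=> None) d by move=> t solt; apply: mind => z; apply: solt.
have weight0 : weight setT (fun=> None) = 0 by rewrite /weight big1.
by have := leaves_bound_pprot inv0 (fun u _ => solp _ _) hard0; rewrite weight0 muln1.
Qed.

End Lifting.

Section LogRatio.
Local Open Scope R_scope.

Lemma INR_expn m n : INR (m ^ n)%N = INR m ^ n.
Proof. by elim: n => // n IHn; rewrite expnS mult_INR IHn. Qed.

Lemma le_ln_ratio m d L : (1 < m)%N -> (m ^ d <= L)%N -> INR d <= ln (INR L) / ln (INR m).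
Proof.
move=> m_gt1 le_mdL.
have INRm_gt1 : 1 < INR m by apply: (lt_INR 1); apply/ltP.
have lnm_gt0 : 0 < ln (INR m) by rewrite -ln_1; apply: ln_increasing; lra.
have le_ln : INR d * ln (INR m) <= ln (INR L).
  rewrite -ln_pow -?INR_expn; last lra.
  have [lt|->] := Rle_lt_or_eq_dec _ _ (le_INR _ _ (leP le_mdL)); last exact: Rle_refl.
  by apply/Rlt_le/ln_increasing => //; apply/lt_0_INR/ltP; rewrite expn_gt0 ltnW.
apply: (Rmult_le_reg_r (ln (INR m))) => //.
by rewrite /Rdiv Rmult_assoc Rinv_l ?Rmult_1_r //; apply: Rgt_not_eq.
Qed.

End LogRatio.

Theorem theorem17 :
  exists c : R, Rlt 0 c /\
    forall (l N : nat) (W : Type) (Rel : relation N W) (d L : nat),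
      2 <= l ->
      is_Cdt Rel d ->
      is_Lpp l Rel L ->
      Rle (INR d) (Rmult c (Rdiv (ln (INR L)) (ln (INR (2 ^ l))))).
Proof.
exists R1; split; first lra.
move=> l N W Rel d L le2l [_ mind] [[p [solp <-]] _].
rewrite Rmult_1_l; apply: le_ln_ratio; first by have := ltn_expl l (ltnSn 1); lia.
by rewrite -expnM; apply: leaves_lower_bound => //; lia.
Qed.
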